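(* Let $M\ge1$, $\Delta x,\Delta y>0$, and consider the Cartesian cells $C_{j,k}=[x_{j-\frac12},x_{j+\frac12}]\times[y_{k-\frac12},y_{k+\frac12}]$ with centers $(x_j,y_k)=(j\Delta x,k\Delta y)$, $j,k\in\{-M,\dots,M\}$. Let $H:[0,\infty)\to\mathbb{R}$ be differentiable, $V:\mathbb{R}^2\to\mathbb{R}$, and $(W_{p,q})_{p,q\in\{-2M,\dots,2M\}}$ real numbers. Suppose cell averages $\overline\rho_{j,k}\ge0$ are given at time $t$, and define: \begin{itemize} \item slopes $(\rho_x)_{j,k},(\rho_y)_{j,k}$ and point values $\rho_{j,k}^{\rm E}=\overline\rho_{j,k}+\frac{\Delta x}{2}(\rho_x)_{j,k}$, $\rho_{j,k}^{\rm W}=\overline\rho_{j,k}-\frac{\Delta x}{2}(\rho_x)_{j,k}$, $\rho_{j,k}^{\rm N}=\overline\rho_{j,k}+\frac{\Delta y}{2}(\rho_y)_{j,k}$, $\rho_{j,k}^{\rm S}=\overline\rho_{j,k}-\frac{\Delta y}{2}(\rho_y)_{j,k}$, where the slopes are chosen so that all four point values are nonnegative; \item $\xi_{j,k}=\Delta x\Delta y\sum_{i,l}W_{j-i,k-l}\overline\rho_{i,l}+H'(\overline\rho_{j,k})+V(x_j,y_k)$; \item $u_{j+\frac12,k}=-\frac{\xi_{j+1,k}-\xi_{j,k}}{\Delta x}$, $v_{j,k+\frac12}=-\frac{\xi_{j,k+1}-\xi_{j,k}}{\Delta y}$, with positive parts $u^+=\max(u,0)$, $v^+=\max(v,0)$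 and negative parts $u^-=\min(u,0)$, $v^-=\min(v,0)$; \item $F^x_{j+\frac12,k}=u^+_{j+\frac12,k}\rho^{\rm E}_{j,k}+u^-_{j+\frac12,k}\rho^{\rm W}_{j+1,k}$ and $F^y_{j,k+\frac12}=v^+_{j,k+\frac12}\rho^{\rm N}_{j,k}+v^-_{j,k+\frac12}\rho^{\rm S}_{j,k+1}$ at interior interfaces, and $F^x_{\pm(M+\frac12),k}=F^y_{j,\pm(M+\frac12)}=0$. \end{itemize} Define the forward Euler update \[ \overline\rho_{j,k}(t+\Delta t)=\overline\rho_{j,k}-\frac{\Delta t}{\Delta x}\big(F^x_{j+\frac12,k}-F^x_{j-\frac12,k}\big)-\frac{\Delta t}{\Delta y}\big(F^y_{j,k+\frac12}-F^y_{j,k-\frac12}\big). \] If \[ \Delta t\le\min\Big\{\frac{\Delta x}{4a},\frac{\Delta y}{4b}\Big\},\quad a=\max_{j,k}\{u^+_{j+\frac12,k},-u^-_{j+\frac12,k}\},\quad b=\max_{j,k}\{v^+_{j,k+\frac12},-v^-_{j,k+\frac12}\}, \] then $\overline\rho_{j,k}(t+\Delta t)\ge0$ for all $j,k$. The same conclusion holds if the forward Euler step is replaced by a strong stability preserving Runge–Kutta step whose stages are convex combinations of forward Euler steps, each satisfying this CFL condition. Consequently, starting from nonnegative initial cell averages, all computed cell averages remain nonnegative.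
   Context: This is the two-dimensional semi-discrete finite-volume scheme $\frac{d\overline\rho_{j,k}}{dt}=-\frac{F^x_{j+\frac12,k}-F^x_{j-\frac12,k}}{\Delta x}-\frac{F^y_{j,k+\frac12}-F^y_{j,k-\frac12}}{\Delta y}$ for $\rho_t=\nabla\cdot[\rho\nabla(H'(\rho)+V(\mathbf{x})+W*\rho)]$ with $\rho_0\ge0$; $W_{p,q}$ approximates $W(p\Delta x,q\Delta y)$. In the paper the slopes are centered differences, replaced by generalized minmod-limited slopes where a point value would otherwise be negative. *)

From Stdlib Require Import Reals ZArith List.
From Coquelicot Require Import Coquelicot.
Open Scope R_scope.

(* Grid data: functions Z -> Z -> R, only the cells j,k in {-M..M} matter. *)
Definition grid (M : nat) : list Z :=
  map (fun n => (Z.of_nat n - Z.of_nat M)%Z) (seq 0 (2 * M + 1)).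
(* interior interfaces j+1/2 with j in {-M..M-1} *)
Definition ifaces (M : nat) : list Z :=
  map (fun n => (Z.of_nat n - Z.of_nat M)%Z) (seq 0 (2 * M)).

Definition inG (M : nat) (j : Z) : Prop := (- Z.of_nat M <= j <= Z.of_nat M)%Z.
Definition is_iface (M : nat) (j : Z) : bool :=
  andb (- Z.of_nat M <=? j)%Z (j <? Z.of_nat M)%Z.

Definition sumL (l : list Z) (f : Z -> R) : R := fold_right (fun z acc => f z + acc) 0 l.
Definition maxL (l : list Z) (f : Z -> R) : R := fold_right (fun z acc => Rmax (f z) acc) 0 l.
Definition sumN (n : nat) (f : nat -> R) : R := fold_right (fun l acc => f l + acc) 0 (seq 0 n).

Definition posp (x : R) : R := Rmax x 0.
Definition negp (x : R) : R := Rmin x 0.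

Definition deriv_on_nonneg (H dH : R -> R) : Prop :=
  (forall x, 0 < x -> is_derive H x (dH x)) /\
  filterlim (fun h => (H h - H 0) / h) (at_right 0) (locally (dH 0)).

Section Scheme.
Variables (M : nat) (dx dy : R) (W : Z -> Z -> R) (dH : R -> R) (V : R -> R -> R).

Definition xi (rho : Z -> Z -> R) (j k : Z) : R :=
  dx * dy * sumL (grid M) (fun i => sumL (grid M) (fun l => W (j - i)%Z (k - l)%Z * rho i l))
  + dH (rho j k) + V (IZR j * dx) (IZR k * dy).

Definition uvel rho j k : R := - (xi rho (j + 1)%Z k - xi rho j k) / dx.
Definition vvel rho j k : R := - (xi rho j (k + 1)%Z - xi rho j k) / dy.

Definition ptE (rho rx : Z -> Z -> R) j k := rho j k + dx / 2 * rx j k.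
Definition ptW (rho rx : Z -> Z -> R) j k := rho j k - dx / 2 * rx j k.
Definition ptN (rho ry : Z -> Z -> R) j k := rho j k + dy / 2 * ry j k.
Definition ptS (rho ry : Z -> Z -> R) j k := rho j k - dy / 2 * ry j k.

(* Fx j k = F^x_{j+1/2,k}, zero at the boundary interfaces +-(M+1/2) *)
Definition Fx (rho rx : Z -> Z -> R) j k : R :=
  if is_iface M j then posp (uvel rho j k) * ptE rho rx j k
                       + negp (uvel rho j k) * ptW rho rx (j + 1)%Z k
  else 0.
Definition Fy (rho ry : Z -> Z -> R) j k : R :=
  if is_iface M k then posp (vvel rho j k) * ptN rho ry j k
                       + negp (vvel rho j k) * ptS rho ry j (k + 1)%Z
  else 0.

Definition fe_step (rx ry : Z -> Z -> R) (dt : R) (rho : Z -> Z -> R) (j k : Z) : R :=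
  rho j k - dt / dx * (Fx rho rx j k - Fx rho rx (j - 1)%Z k)
          - dt / dy * (Fy rho ry j k - Fy rho ry j (k - 1)%Z).

Definition a_speed rho : R :=
  maxL (ifaces M) (fun j => maxL (grid M) (fun k =>
    Rmax (posp (uvel rho j k)) (- negp (uvel rho j k)))).
Definition b_speed rho : R :=
  maxL (grid M) (fun j => maxL (ifaces M) (fun k =>
    Rmax (posp (vvel rho j k)) (- negp (vvel rho j k)))).

(* dt <= min(dx/(4a), dy/(4b)), written without division (a or b may be 0) *)
Definition cfl rho dt : Prop := 4 * a_speed rho * dt <= dx /\ 4 * b_speed rho * dt <= dy.

Definition nonneg_grid (rho : Z -> Z -> R) : Prop :=
  forall j k, inG M j -> inG M k -> 0 <= rho j k.

Definition slopes_ok (rho rx ry : Z -> Z -> R) : Prop :=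
  forall j k, inG M j -> inG M k ->
    0 <= ptE rho rx j k /\ 0 <= ptW rho rx j k /\ 0 <= ptN rho ry j k /\ 0 <= ptS rho ry j k.

Definition limiter_ok (sx sy : (Z -> Z -> R) -> Z -> Z -> R) : Prop :=
  forall rho, nonneg_grid rho -> slopes_ok rho (sx rho) (sy rho).

(* An SSP Runge-Kutta step in Shu-Osher form: each stage is a convex
   combination of forward Euler steps applied to earlier stages, each
   forward Euler step (with its effective time step tau) satisfying the CFL
   condition for the stage it is applied to. *)
Definition ssp_rk_step (sx sy : (Z -> Z -> R) -> Z -> Z -> R)
    (rho rho' : Z -> Z -> R) : Prop :=
  exists (s : nat) (alpha tau : nat -> nat -> R) (stage : nat -> Z -> Z -> R),
    (forall j k, inG M j -> inG M k -> stage 0%nat j k = rho j k) /\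
    (forall i l, (1 <= i <= s)%nat -> (l < i)%nat ->
       0 <= alpha i l /\ 0 <= tau i l /\ cfl (stage l) (tau i l)) /\
    (forall i, (1 <= i <= s)%nat -> sumN i (fun l => alpha i l) = 1) /\
    (forall i j k, (1 <= i <= s)%nat -> inG M j -> inG M k ->
       stage i j k = sumN i (fun l =>
         alpha i l * fe_step (sx (stage l)) (sy (stage l)) (tau i l) (stage l) j k)) /\
    (forall j k, inG M j -> inG M k -> rho' j k = stage s j k).

End Scheme.

(* Since the point values satisfy [rho = (E + W + N + S) / 4], the forward Euler
   update is the sum of the four quarter point values minus the outgoing upwind
   fluxes plus the incoming ones.  The incoming fluxes are nonnegative, and the
   CFL condition [dt <= dx / (4 a)] makes the flux leaving through a face, times
   [dt / dx], at most a quarter of the point value on that face; hence every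
   term stays nonnegative.  An SSP Runge-Kutta stage is a convex combination of
   such forward Euler steps of earlier stages, so nonnegativity propagates
   through the stages and then through the time steps. *)
From Stdlib Require Import Reals ZArith List Lra Lia.
From Coquelicot Require Import Coquelicot.
Open Scope R_scope.

Lemma maxL_ge (l : list Z) (f : Z -> R) (z : Z) : In z l -> f z <= maxL l f.
Proof.
  induction l as [|a l IH]; simpl; [tauto|].
  intros [->|Hz]; [apply Rmax_l|].
  eapply Rle_trans; [apply IH, Hz | apply Rmax_r].
Qed.

Lemma sumN_ge0 (n : nat) (f : nat -> R) :
  (forall l, (l < n)%nat -> 0 <= f l) -> 0 <= sumN n f.
Proof.
  unfold sumN; intros Hf.
  assert (Hin : forall l, In l (seq 0 n) -> 0 <= f l)
    by (intros l Hl; apply in_seq in Hl; apply Hf; lia).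
  clear Hf; induction (seq 0 n) as [|l s IH]; simpl; [lra|].
  assert (0 <= f l) by (apply Hin; left; reflexivity).
  assert (0 <= fold_right (fun l acc => f l + acc) 0 s)
    by (apply IH; intros; apply Hin; right; assumption).
  lra.
Qed.

Lemma in_grid (M : nat) (j : Z) : inG M j -> In j (grid M).
Proof.
  unfold inG, grid; intros Hj; apply in_map_iff.
  exists (Z.to_nat (j + Z.of_nat M)); split; [lia | apply in_seq; lia].
Qed.

Lemma is_iface_inG (M : nat) (j : Z) :
  is_iface M j = true -> inG M j /\ inG M (j + 1).
Proof.
  unfold is_iface, inG; intros Hj; apply andb_prop in Hj as [Hlo Hhi].
  apply Z.leb_le in Hlo; apply Z.ltb_lt in Hhi; lia.
Qed.

Lemma in_ifaces (M : nat) (j : Z) : is_iface M j = true -> In j (ifaces M).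
Proof.
  unfold is_iface, ifaces; intros Hj; apply andb_prop in Hj as [Hlo Hhi].
  apply Z.leb_le in Hlo; apply Z.ltb_lt in Hhi; apply in_map_iff.
  exists (Z.to_nat (j + Z.of_nat M)); split; [lia | apply in_seq; lia].
Qed.

Lemma posp_ge0 (x : R) : 0 <= posp x.
Proof. apply Rmax_r. Qed.

Lemma negp_le0 (x : R) : negp x <= 0.
Proof. apply Rmin_r. Qed.

Lemma speed_bounds (c u : R) :
  Rmax (posp u) (- negp u) <= c -> posp u <= c /\ - negp u <= c.
Proof.
  pose proof (Rmax_l (posp u) (- negp u)); pose proof (Rmax_r (posp u) (- negp u)).
  intros; split; lra.
Qed.

(* [lam] is the mesh ratio [dt / dx]; [p] is the upwind value on the left of the
   face and [q] the one on the right. *)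
Lemma upwind_flux_bounds (lam c u p q : R) :
  0 <= lam -> 4 * c * lam <= 1 -> posp u <= c -> - negp u <= c ->
  0 <= p -> 0 <= q ->
  lam * (posp u * p + negp u * q) <= p / 4 /\
  - (q / 4) <= lam * (posp u * p + negp u * q).
Proof.
  intros Hlam Hcfl Hpos Hneg Hp Hq.
  pose proof (posp_ge0 u); pose proof (negp_le0 u).
  assert (Hin : lam * posp u <= 1 / 4) by nra.
  assert (Hout : lam * - negp u <= 1 / 4) by nra.
  assert (lam * posp u * p <= p / 4) by nra.
  assert (lam * - negp u * q <= q / 4) by nra.
  assert (0 <= lam * posp u * p) by (apply Rmult_le_pos; [apply Rmult_le_pos|]; assumption).
  assert (0 <= lam * - negp u * q) by (apply Rmult_le_pos; [apply Rmult_le_pos|]; lra).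
  split; nra.
Qed.

Lemma cfl_ratio (c dt dx : R) : 0 < dx -> 4 * c * dt <= dx -> 4 * c * (dt / dx) <= 1.
Proof.
  intros Hdx Hcfl; apply (Rmult_le_reg_r dx); [lra|].
  replace (4 * c * (dt / dx) * dx) with (4 * c * dt) by (field; lra); lra.
Qed.

Section ForwardEuler.
Variables (M : nat) (dx dy : R) (W : Z -> Z -> R) (dH : R -> R) (V : R -> R -> R).
Variables (rho rx ry : Z -> Z -> R) (dt : R).
Hypotheses (Hdx : 0 < dx) (Hdy : 0 < dy) (Hdt : 0 <= dt).
Hypothesis Hslopes : slopes_ok M dx dy rho rx ry.
Hypothesis Hcfl : cfl M dx dy W dH V rho dt.

Let ratio_x_ge0 : 0 <= dt / dx.
Proof. apply Rmult_le_pos; [lra | left; apply Rinv_0_lt_compat; lra]. Qed.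

Let ratio_y_ge0 : 0 <= dt / dy.
Proof. apply Rmult_le_pos; [lra | left; apply Rinv_0_lt_compat; lra]. Qed.

Lemma uvel_le_a_speed (j k : Z) : is_iface M j = true -> inG M k ->
  Rmax (posp (uvel M dx dy W dH V rho j k)) (- negp (uvel M dx dy W dH V rho j k))
  <= a_speed M dx dy W dH V rho.
Proof.
  intros Hj Hk; eapply Rle_trans;
    [| apply (maxL_ge (ifaces M)), in_ifaces, Hj].
  apply (maxL_ge (grid M) (fun k0 => Rmax (posp (uvel M dx dy W dH V rho j k0))
                                          (- negp (uvel M dx dy W dH V rho j k0)))).
  apply in_grid, Hk.
Qed.

Lemma vvel_le_b_speed (j k : Z) : inG M j -> is_iface M k = true ->
  Rmax (posp (vvel M dx dy W dH V rho j k)) (- negp (vvel M dx dy W dH V rho j k))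
  <= b_speed M dx dy W dH V rho.
Proof.
  intros Hj Hk; eapply Rle_trans; [| apply (maxL_ge (grid M)), in_grid, Hj].
  apply (maxL_ge (ifaces M) (fun k0 => Rmax (posp (vvel M dx dy W dH V rho j k0))
                                            (- negp (vvel M dx dy W dH V rho j k0)))).
  apply in_ifaces, Hk.
Qed.

Lemma Fx_interface_bounds (j k : Z) : is_iface M j = true -> inG M k ->
  dt / dx * Fx M dx dy W dH V rho rx j k <= ptE dx rho rx j k / 4 /\
  - (ptW dx rho rx (j + 1) k / 4) <= dt / dx * Fx M dx dy W dH V rho rx j k.
Proof.
  intros Hj Hk; destruct (is_iface_inG M j Hj) as [Hj0 Hj1].
  destruct (Hslopes j k Hj0 Hk) as (HE & _); destruct (Hslopes _ k Hj1 Hk) as (_ & HW & _).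
  destruct (speed_bounds _ _ (uvel_le_a_speed j k Hj Hk)).
  unfold Fx; rewrite Hj.
  apply upwind_flux_bounds with (c := a_speed M dx dy W dH V rho); auto.
  apply cfl_ratio; [lra | apply Hcfl].
Qed.

Lemma Fy_interface_bounds (j k : Z) : inG M j -> is_iface M k = true ->
  dt / dy * Fy M dx dy W dH V rho ry j k <= ptN dy rho ry j k / 4 /\
  - (ptS dy rho ry j (k + 1) / 4) <= dt / dy * Fy M dx dy W dH V rho ry j k.
Proof.
  intros Hj Hk; destruct (is_iface_inG M k Hk) as [Hk0 Hk1].
  destruct (Hslopes j k Hj Hk0) as (_ & _ & HN & _).
  destruct (Hslopes j _ Hj Hk1) as (_ & _ & _ & HS).
  destruct (speed_bounds _ _ (vvel_le_b_speed j k Hj Hk)).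
  unfold Fy; rewrite Hk.
  apply upwind_flux_bounds with (c := b_speed M dx dy W dH V rho); auto.
  apply cfl_ratio; [lra | apply Hcfl].
Qed.

Lemma Fx_outflow_le (j k : Z) : inG M j -> inG M k ->
  dt / dx * Fx M dx dy W dH V rho rx j k <= ptE dx rho rx j k / 4.
Proof.
  intros Hj Hk; destruct (is_iface M j) eqn:Hface.
  - apply (Fx_interface_bounds j k Hface Hk).
  - destruct (Hslopes j k Hj Hk) as (HE & _).
    unfold Fx; rewrite Hface; lra.
Qed.

Lemma Fx_inflow_ge (j k : Z) : inG M j -> inG M k ->
  - (ptW dx rho rx j k / 4) <= dt / dx * Fx M dx dy W dH V rho rx (j - 1) k.
Proof.
  intros Hj Hk; destruct (is_iface M (j - 1)) eqn:Hface.
  - replace j with (j - 1 + 1)%Z at 1 by lia.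
    apply (Fx_interface_bounds (j - 1) k Hface Hk).
  - destruct (Hslopes j k Hj Hk) as (_ & HW & _).
    unfold Fx; rewrite Hface; lra.
Qed.

Lemma Fy_outflow_le (j k : Z) : inG M j -> inG M k ->
  dt / dy * Fy M dx dy W dH V rho ry j k <= ptN dy rho ry j k / 4.
Proof.
  intros Hj Hk; destruct (is_iface M k) eqn:Hface.
  - apply (Fy_interface_bounds j k Hj Hface).
  - destruct (Hslopes j k Hj Hk) as (_ & _ & HN & _).
    unfold Fy; rewrite Hface; lra.
Qed.

Lemma Fy_inflow_ge (j k : Z) : inG M j -> inG M k ->
  - (ptS dy rho ry j k / 4) <= dt / dy * Fy M dx dy W dH V rho ry j (k - 1).
Proof.
  intros Hj Hk; destruct (is_iface M (k - 1)) eqn:Hface.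
  - replace k with (k - 1 + 1)%Z at 1 by lia.
    apply (Fy_interface_bounds j (k - 1) Hj Hface).
  - destruct (Hslopes j k Hj Hk) as (_ & _ & _ & HS).
    unfold Fy; rewrite Hface; lra.
Qed.

Lemma fe_step_nonneg : nonneg_grid M (fe_step M dx dy W dH V rx ry dt rho).
Proof.
  intros j k Hj Hk.
  pose proof (Fx_outflow_le j k Hj Hk); pose proof (Fx_inflow_ge j k Hj Hk).
  pose proof (Fy_outflow_le j k Hj Hk); pose proof (Fy_inflow_ge j k Hj Hk).
  unfold fe_step; unfold ptE, ptW, ptN, ptS in *; lra.
Qed.

End ForwardEuler.

Lemma ssp_rk_step_nonneg (M : nat) (dx dy : R) (W : Z -> Z -> R) (dH : R -> R)
    (V : R -> R -> R) (sx sy : (Z -> Z -> R) -> Z -> Z -> R) (rho rho' : Z -> Z -> R) :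
  0 < dx -> 0 < dy -> limiter_ok M dx dy sx sy -> nonneg_grid M rho ->
  ssp_rk_step M dx dy W dH V sx sy rho rho' -> nonneg_grid M rho'.
Proof.
  intros Hdx Hdy Hlim Hrho (s & alpha & tau & stage & Hfirst & Hcoef & _ & Hstage & Hlast).
  assert (stage_nonneg : forall i, (i <= s)%nat -> nonneg_grid M (stage i)).
  { intros i; induction i as [i IH] using lt_wf_ind; intros Hi j k Hj Hk.
    destruct i as [|i].
    - rewrite Hfirst by assumption; apply Hrho; assumption.
    - rewrite Hstage by (try lia; assumption); apply sumN_ge0; intros l Hl.
      destruct (Hcoef (S i) l ltac:(lia) Hl) as (Halpha & Htau & Hcfl).
      apply Rmult_le_pos; [assumption|].
      apply fe_step_nonneg; try assumption.
      apply Hlim, IH; lia. }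
  intros j k Hj Hk; rewrite Hlast by assumption; apply stage_nonneg; auto.
Qed.

Theorem theorem2p3 (M : nat) (dx dy : R) (H dH : R -> R) (V : R -> R -> R)
    (W : Z -> Z -> R) :
  (1 <= M)%nat -> 0 < dx -> 0 < dy -> deriv_on_nonneg H dH ->
  (* forward Euler *)
  (forall (rho rx ry : Z -> Z -> R) (dt : R),
     nonneg_grid M rho -> slopes_ok M dx dy rho rx ry -> 0 < dt ->
     cfl M dx dy W dH V rho dt ->
     nonneg_grid M (fe_step M dx dy W dH V rx ry dt rho)) /\
  (* SSP Runge-Kutta step *)
  (forall sx sy, limiter_ok M dx dy sx sy ->
     forall rho rho', nonneg_grid M rho ->
       ssp_rk_step M dx dy W dH V sx sy rho rho' -> nonneg_grid M rho') /\
  (* all computed cell averages stay nonnegative *)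
  (forall sx sy, limiter_ok M dx dy sx sy ->
     forall rhos : nat -> Z -> Z -> R, nonneg_grid M (rhos 0%nat) ->
       (forall n, ssp_rk_step M dx dy W dH V sx sy (rhos n) (rhos (S n))) ->
       forall n, nonneg_grid M (rhos n)).
Proof.
  intros _ Hdx Hdy _.
  split; [|split].
  - intros rho rx ry dt _ Hslopes Hdt Hcfl.
    apply fe_step_nonneg; auto; lra.
  - intros sx sy Hlim rho rho'; apply ssp_rk_step_nonneg; assumption.
  - intros sx sy Hlim rhos H0 Hstep n; induction n as [|n IH]; [assumption|].
    apply (ssp_rk_step_nonneg M dx dy W dH V sx sy (rhos n)); auto.
Qed.
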